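(* Let $\mathrm y^\star\in\mathbb R^{d|\mathbb V|}$ and $\zeta^\star=\mathcal E^T\mathrm y^\star$, and suppose $\mathbf 0\in k^{-1}(\mathrm y^\star)+\mathcal E\gamma(\zeta^\star)$. Suppose further that for every $e\in\mathbb E$ the function $\Gamma_e$ is strictly convex on a neighborhood of $\zeta^\star_e$. Define $G:\mathrm{IM}(\mathcal E^T)\to\mathbb R\cup\{\pm\infty\}$ by $G(\zeta)=\inf\{K^\star(\mathrm y):\mathcal E^T\mathrm y=\zeta\}$. Then $\zeta^\star$ is the unique minimizer of $\Gamma(\zeta)+G(\zeta)$ over $\zeta\in\mathrm{IM}(\mathcal E^T)$.
   Context: $\mathcal G=(\mathbb V,\mathbb E)$ is a finite graph with arbitrarily oriented edges and incidence matrix $E$ ($E_{ik}=-1$, $E_{jk}=1$ for edge $k=(i,j)$, other entries of column $k$ zero); $d\ge1$, $\mathcal E=E\otimes I_d$, $\mathrm{IM}(\mathcal E^T)$ the image of $\mathcal E^T$. For each $i\in\mathbb V$, $k_i\subseteq\mathbb R^d\times\mathbb R^d$ (agent steady-state input-output relation) and for each $e\in\mathbb E$, $\gamma_e\subseteq\mathbb R^d\times\mathbb R^d$ (controller steady-state relation) are maximal cyclically monotone (a relation $R$ is cyclically monotone if $\sum_{i=1}^N y_i^T(u_i-u_{i-1})\ge0$ for all $N\ge1$ and $(u_1,y_1),\dots,(u_N,y_N)\in R$, $u_0=u_N$; maximal if not strictly contained in a larger such relation), so $k_i=\partial K_i$, $\gamma_e=\partial\Gamma_e$ for closed proper convex functions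 $K_i,\Gamma_e:\mathbb R^d\to\mathbb R\cup\{+\infty\}$. $k,\gamma$ are stacked relations, viewed as set-valued maps with $k^{-1}(\mathrm y)=\{\mathrm u:(\mathrm u,\mathrm y)\in k\}$, $\gamma(\zeta)=\{\mu:(\zeta,\mu)\in\gamma\}$. $K(\mathrm u)=\sum_iK_i(\mathrm u_i)$, $\Gamma(\zeta)=\sum_e\Gamma_e(\zeta_e)$, $K^\star(y)=\sup_u\{y^Tu-K(u)\}$. $\mathcal ES=\{\mathcal Es:s\in S\}$, $A+B$ Minkowski sum. *)

From mathcomp Require Import ssreflect ssrfun ssrbool eqtype ssrnat seq fintype bigop.
From Stdlib Require Import Reals ClassicalEpsilon.
Set Implicit Arguments. Unset Strict Implicit. Unset Printing Implicit Defensive.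

Local Open Scope R_scope.

Definition vec (d : nat) := 'I_d -> R.
Definition vdot d (x y : vec d) : R := \big[Rplus/0]_(k < d) (x k * y k).
Definition vsub d (x y : vec d) : vec d := fun k => x k - y k.
Definition vcomb d (t : R) (x y : vec d) : vec d := fun k => t * x k + (1 - t) * y k.
Definition in_ball d (c : vec d) (r : R) (x : vec d) : Prop := forall k, Rabs (x k - c k) < r.

Inductive ext := Fin (r : R) | PInf | NInf.

Definition ele (x y : ext) : Prop :=
  match x, y with
  | NInf, _ => True
  | _, PInf => True
  | Fin a, Fin b => a <= b
  | _, _ => False
  end.
Definition elt (x y : ext) : Prop := ele x y /\ x <> y.

(* inf-addition convention: +∞ absorbs, i.e. (+∞) + (-∞) = +∞ *)
Definition eadd (x y : ext) : ext :=
  match x, y with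
  | PInf, _ => PInf
  | _, PInf => PInf
  | NInf, _ => NInf
  | _, NInf => NInf
  | Fin a, Fin b => Fin (a + b)
  end.
Definition eopp (x : ext) : ext :=
  match x with Fin a => Fin (- a) | PInf => NInf | NInf => PInf end.

Definition is_esup (S : ext -> Prop) (x : ext) : Prop :=
  (forall s, S s -> ele s x) /\ (forall b, (forall s, S s -> ele s b) -> ele x b).
Definition is_einf (S : ext -> Prop) (x : ext) : Prop :=
  (forall s, S s -> ele x s) /\ (forall b, (forall s, S s -> ele b s) -> ele b x).
Definition esup (S : ext -> Prop) : ext := epsilon (inhabits PInf) (is_esup S).
Definition einf (S : ext -> Prop) : ext := epsilon (inhabits PInf) (is_einf S).

Definition proper_fun d (f : vec d -> ext) : Prop :=
  (forall x, f x <> NInf) /\ (exists x, f x <> PInf).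
(* convexity = convexity of the epigraph *)
Definition convex_fun d (f : vec d -> ext) : Prop :=
  forall x y t a b, 0 <= t <= 1 -> ele (f x) (Fin a) -> ele (f y) (Fin b) ->
    ele (f (vcomb t x y)) (Fin (t * a + (1 - t) * b)).
(* closed = lower semicontinuous *)
Definition closed_fun d (f : vec d -> ext) : Prop :=
  forall x r, elt (Fin r) (f x) ->
    exists del, 0 < del /\ forall z, in_ball x del z -> elt (Fin r) (f z).
Definition closed_proper_convex d (f : vec d -> ext) : Prop :=
  closed_fun f /\ proper_fun f /\ convex_fun f.
Definition strictly_convex_on_ball d (f : vec d -> ext) (c : vec d) (r : R) : Prop :=
  forall x y t a b, in_ball c r x -> in_ball c r y -> x <> y -> 0 < t < 1 ->
    ele (f x) (Fin a) -> ele (f y) (Fin b) ->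
    elt (f (vcomb t x y)) (Fin (t * a + (1 - t) * b)).
Definition strictly_convex_near d (f : vec d -> ext) (c : vec d) : Prop :=
  exists r, 0 < r /\ strictly_convex_on_ball f c r.

Definition subdiff d (f : vec d -> ext) (x g : vec d) : Prop :=
  exists a, f x = Fin a /\ forall z, ele (Fin (a + vdot g (vsub z x))) (f z).

Definition cyc_monotone d (Rel : vec d -> vec d -> Prop) : Prop :=
  forall (N : nat) (u y : nat -> vec d), leq 1 N ->
    (forall j : nat, leq 1 j -> leq j N -> Rel (u j) (y j)) ->
    0 <= \big[Rplus/0]_(j <- index_iota 1 N.+1)
           vdot (y j) (vsub (u j) (if Nat.eqb j 1%nat then u N else u j.-1)).
Definition max_cyc_monotone d (Rel : vec d -> vec d -> Prop) : Prop :=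
  cyc_monotone Rel /\
  forall Rel' : vec d -> vec d -> Prop, cyc_monotone Rel' ->
    (forall a b, Rel a b -> Rel' a b) -> forall a b, Rel' a b -> Rel a b.

(* E_{v e} for an edge e oriented from (src e) to (tgt e) *)
Definition inc (V Ed : finType) (src tgt : Ed -> V) (e : Ed) (v : V) : R :=
  if v == tgt e then 1 else if v == src e then -1 else 0.
(* (E ⊗ I_d)^T y *)
Definition ET d (V Ed : finType) (src tgt : Ed -> V) (y : V -> vec d) : Ed -> vec d :=
  fun e k => \big[Rplus/0]_(v : V) (inc src tgt e v * y v k).
(* (E ⊗ I_d) mu *)
Definition Emul d (V Ed : finType) (src tgt : Ed -> V) (mu : Ed -> vec d) : V -> vec d :=
  fun v k => \big[Rplus/0]_(e : Ed) (inc src tgt e v * mu e k).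
Definition in_im_ET d (V Ed : finType) (src tgt : Ed -> V) (z : Ed -> vec d) : Prop :=
  exists y, forall e k, ET src tgt y e k = z e k.

Definition sdot d (V : finType) (y u : V -> vec d) : R :=
  \big[Rplus/0]_(v : V) vdot (y v) (u v).
Definition Ksum d (V : finType) (Kf : V -> vec d -> ext) (u : V -> vec d) : ext :=
  \big[eadd/Fin 0]_(v : V) Kf v (u v).
Definition Kstar d (V : finType) (Kf : V -> vec d -> ext) (y : V -> vec d) : ext :=
  esup (fun s => exists u, s = eadd (Fin (sdot y u)) (eopp (Ksum Kf u))).
Definition Gfun d (V Ed : finType) (src tgt : Ed -> V) (Kf : V -> vec d -> ext)
    (z : Ed -> vec d) : ext :=
  einf (fun s => exists y, (forall e k, ET src tgt y e k = z e k) /\ s = Kstar Kf y).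
Definition objective d (V Ed : finType) (src tgt : Ed -> V) (Kf : V -> vec d -> ext)
    (Gf : Ed -> vec d -> ext) (z : Ed -> vec d) : ext :=
  eadd (Ksum Gf z) (Gfun src tgt Kf z).

(* The pair (u, μ) given by the hypothesis is a dual certificate.  Since u = -Eμ, every y with
   Eᵀy = ζ satisfies yᵀu = -μᵀζ, so K⋆(y) ≥ -μᵀζ - K(u) and hence G(ζ) ≥ -μᵀζ - K(u); at y⋆ the
   subgradient inequality of K turns this into an equality (Fenchel-Young).  Together with
   Γ(ζ) ≥ Γ(ζ⋆) + μᵀ(ζ - ζ⋆) the objective is bounded below by a constant that it attains at ζ⋆.
   At any other minimizer each edge's subgradient inequality must be tight, which local strict
   convexity of Γ_e forbids away from ζ⋆_e. *)
From HB Require Import structures.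
From mathcomp Require Import ssreflect ssrfun ssrbool eqtype ssrnat seq fintype bigop.
From Stdlib Require Import Reals Lra ClassicalEpsilon Classical.
Set Implicit Arguments. Unset Strict Implicit. Unset Printing Implicit Defensive.
Local Open Scope R_scope.

Lemma RplusA : associative Rplus. Proof. by move=> *; ring. Qed.
HB.instance Definition _ := Monoid.isComLaw.Build R 0 Rplus RplusA Rplus_comm Rplus_0_l.

Lemma sumRN (I : Type) (r : seq I) (P : pred I) (F : I -> R) :
  \big[Rplus/0]_(i <- r | P i) (- F i) = - \big[Rplus/0]_(i <- r | P i) F i.
Proof. by rewrite (big_endo Ropp) //; [move=> x y; lra | lra]. Qed.

Lemma sumRMl (I : Type) (r : seq I) (P : pred I) (F : I -> R) c :
  \big[Rplus/0]_(i <- r | P i) (c * F i) = c * \big[Rplus/0]_(i <- r | P i) F i.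
Proof. by rewrite (big_endo (Rmult c)) //; [move=> x y; lra | lra]. Qed.

Lemma sumRB (I : Type) (r : seq I) (F G : I -> R) :
  \big[Rplus/0]_(i <- r) (F i - G i) =
  \big[Rplus/0]_(i <- r) F i - \big[Rplus/0]_(i <- r) G i.
Proof. by rewrite big_split /= sumRN. Qed.

Lemma sumR_ge0 (I : Type) (r : seq I) (P : pred I) (F : I -> R) :
  (forall i, 0 <= F i) -> 0 <= \big[Rplus/0]_(i <- r | P i) F i.
Proof. by move=> H; apply: (big_ind (fun x => 0 <= x)) => *; [lra | lra | apply: H]. Qed.

Lemma sumR_ge_term (I : finType) (F : I -> R) j :
  (forall i, 0 <= F i) -> F j <= \big[Rplus/0]_(i : I) F i.
Proof.
move=> H; rewrite (bigD1 j) //=.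
have := sumR_ge0 (index_enum I) (fun i => i != j) H; lra.
Qed.

Lemma sumR_squeeze (I : finType) (F G : I -> R) :
  (forall i, F i <= G i) -> \big[Rplus/0]_(i : I) G i <= \big[Rplus/0]_(i : I) F i ->
  forall j, G j <= F j.
Proof.
move=> HFG Hsum j.
have := sumR_ge_term j (F := fun i => G i - F i) (fun i => ltac:(have := HFG i; lra)).
rewrite sumRB; lra.
Qed.

Lemma ele_refl x : ele x x.
Proof. by case: x => //= r; lra. Qed.

Lemma ele_trans x y z : ele x y -> ele y z -> ele x z.
Proof. by case: x; case: y; case: z => //= *; lra. Qed.

Lemma ele_opp x y : ele (eopp x) (eopp y) <-> ele y x.
Proof. by case: x; case: y => //= *; split => *; lra. Qed.

Lemma eoppK x : eopp (eopp x) = x.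
Proof. by case: x => //= r; rewrite Ropp_involutive. Qed.

Lemma elt_ele_absurd X p q : elt X (Fin p) -> ele (Fin q) X -> p <= q -> False.
Proof. by case: X => [x||] [H1 H2] //= H3 H4; apply: H2; f_equal; simpl in H1; lra. Qed.

Lemma ele_eadd_lb a b X Y :
  ele (Fin a) X -> ele (Fin b) Y -> ele (Fin (a + b)) (eadd X Y).
Proof. by case: X; case: Y => //= *; lra. Qed.

Lemma ele_eadd_ub a b X Y :
  ele X (Fin a) -> ele Y (Fin b) -> ele (eadd X Y) (Fin (a + b)).
Proof. by case: X; case: Y => //= *; lra. Qed.

Lemma eadd_ele_fin X Y b c : ele (eadd X Y) (Fin c) -> ele (Fin b) Y -> ele X (Fin (c - b)).
Proof. by case: X; case: Y => //= *; lra. Qed.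

Lemma eadd_finite a b c X Y :
  ele (Fin a) X -> ele (Fin b) Y -> ele (eadd X Y) (Fin c) ->
  exists x y, X = Fin x /\ Y = Fin y.
Proof. by case: X; case: Y => //= x y *; exists y, x. Qed.

Lemma esup_ex (S : ext -> Prop) : exists x, is_esup S x.
Proof.
case: (classic (S PInf)) => HP.
  exists PInf; split; first by case.
  by move=> b /(_ _ HP); case: b.
case: (classic (exists r, S (Fin r))) => [[r0 Hr0] | HF]; last first.
  exists NInf; split => //.
  by case=> //= r Hr; apply: HF; exists r.
have Hnotbounded : forall b, (forall s, S s -> ele s b) -> b <> NInf.
  by move=> b /(_ _ Hr0); case: b.
case: (classic (bound (fun r => S (Fin r)))) => HB.
  have [m [Hm1 Hm2]] := completeness _ HB (ex_intro _ r0 Hr0).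
  exists (Fin m); split; first by case=> //= r /Hm1.
  case=> [b|//|] Hb; last by case: (Hnotbounded _ Hb).
  by apply: Hm2 => r /(Hb (Fin r)).
exists PInf; split; first by case.
case=> [b|//|] Hb; last by case: (Hnotbounded _ Hb).
by case: HB; exists b => r /(Hb (Fin r)).
Qed.

Lemma einf_ex (S : ext -> Prop) : exists x, is_einf S x.
Proof.
have [x [Hub Hleast]] := esup_ex (fun s => S (eopp s)).
exists (eopp x); split.
  by move=> s Hs; apply/ele_opp; rewrite eoppK; apply: Hub; rewrite eoppK.
move=> b Hb; apply/ele_opp; rewrite eoppK; apply: Hleast => s Hs.
by apply/ele_opp; rewrite eoppK; apply: Hb.
Qed.

Lemma esup_ub S s : S s -> ele s (esup S).
Proof. exact: (proj1 (epsilon_spec _ _ (esup_ex S))). Qed.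

Lemma esup_least S b : (forall s, S s -> ele s b) -> ele (esup S) b.
Proof. exact: (proj2 (epsilon_spec _ _ (esup_ex S))). Qed.

Lemma einf_lb S s : S s -> ele (einf S) s.
Proof. exact: (proj1 (epsilon_spec _ _ (einf_ex S))). Qed.

Lemma einf_greatest S b : (forall s, S s -> ele b s) -> ele b (einf S).
Proof. exact: (proj2 (epsilon_spec _ _ (einf_ex S))). Qed.

Lemma bigE_fin (I : Type) (r : seq I) (f : I -> ext) (a : I -> R) :
  (forall i, f i = Fin (a i)) ->
  \big[eadd/Fin 0]_(i <- r) f i = Fin (\big[Rplus/0]_(i <- r) a i).
Proof. by move=> H; elim: r => [|x r IH]; rewrite ?big_nil // !big_cons IH H. Qed.

Lemma bigE_ge (I : Type) (r : seq I) (f : I -> ext) (a : I -> R) :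
  (forall i, ele (Fin (a i)) (f i)) ->
  ele (Fin (\big[Rplus/0]_(i <- r) a i)) (\big[eadd/Fin 0]_(i <- r) f i).
Proof.
move=> H; elim: r => [|x r IH]; first by rewrite !big_nil /=; lra.
by rewrite !big_cons; apply: ele_eadd_lb.
Qed.

Lemma bigE_finite (I : eqType) (r : seq I) (f : I -> ext) (a : I -> R) c :
  (forall i, ele (Fin (a i)) (f i)) -> ele (\big[eadd/Fin 0]_(i <- r) f i) (Fin c) ->
  forall i, i \in r -> exists b, f i = Fin b.
Proof.
move=> Ha; elim: r c => [|x r IH] c //; rewrite big_cons => Hc i.
have [fx [sr [Hfx Hsr]]] := eadd_finite (Ha x) (bigE_ge r Ha) Hc.
rewrite in_cons => /orP [/eqP -> | Hi]; first by exists fx.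
apply: (IH (c - fx)) => //; move: Hc; rewrite Hfx Hsr /=; lra.
Qed.

Lemma vdot_sub d (m a b : vec d) : vdot m (vsub a b) = vdot m a - vdot m b.
Proof. by rewrite /vdot /vsub -sumRB; apply: eq_bigr => k _; ring. Qed.

Lemma vdot_sub_vcomb d (g x c : vec d) t :
  vdot g (vsub (vcomb t x c) c) = t * vdot g (vsub x c).
Proof. by rewrite /vdot -sumRMl; apply: eq_bigr => k _; rewrite /vsub /vcomb; ring. Qed.

(* The witness is [t = r / (r + M)] with [M] the l1 norm of [x - c], which bounds every
   coordinate of [x - c]. *)
Lemma vcomb_in_ball d (x c : vec d) r :
  0 < r -> exists t, 0 < t <= 1 /\ in_ball c r (vcomb t x c).
Proof.
move=> Hr; pose M := \big[Rplus/0]_(k < d) Rabs (x k - c k).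
have HM : forall k, Rabs (x k - c k) <= M.
  by move=> k; apply: (sumR_ge_term k (F := fun k => Rabs (x k - c k))) => i; apply: Rabs_pos.
have HM0 : 0 <= M := sumR_ge0 _ _ (fun k => Rabs_pos (x k - c k)).
have Ht0 : 0 < r / (r + M) by apply: Rdiv_lt_0_compat; lra.
have Htr : r / (r + M) * (r + M) = r by field; lra.
exists (r / (r + M)); split; first by split; nra.
move=> k; rewrite /vcomb.
have -> : r / (r + M) * x k + (1 - r / (r + M)) * c k - c k = r / (r + M) * (x k - c k).
  by ring.
rewrite Rabs_mult Rabs_pos_eq; last lra.
have := HM k; nra.
Qed.

(* Real part of an extended real; the junk value 0 at the infinities is never used. *)
Definition efin (x : ext) : R := match x with Fin a => a | _ => 0 end.

Lemma subdiffE d (f : vec d -> ext) c g :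
  subdiff f c g ->
  f c = Fin (efin (f c)) /\ forall x, ele (Fin (efin (f c) + vdot g (vsub x c))) (f x).
Proof. by case=> a [-> Ha]. Qed.

(* Strict convexity at the midpoint of [c] and a point [w] of the segment towards [x] would put
   [f] strictly below the supporting hyperplane. *)
Lemma subdiff_tight_eq d (f : vec d -> ext) c g x :
  convex_fun f -> strictly_convex_near f c -> subdiff f c g ->
  ele (f x) (Fin (efin (f c) + vdot g (vsub x c))) -> forall k, x k = c k.
Proof.
move=> Hconv [r [Hr Hstrict]] /subdiffE [Hfc Hsub] Htight l.
apply: NNPP => Hne.
set a := efin (f c) in Hfc Hsub Htight; set D := vdot g (vsub x c) in Htight.
have [t [Ht Hball]] := vcomb_in_ball x c Hr.
set w := vcomb t x c in Hball.
have Hfw : ele (f w) (Fin (t * (a + D) + (1 - t) * a)).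
  by apply: Hconv => //; [lra | rewrite Hfc /=; lra].
have Hwc : w <> c.
  move=> /(f_equal (fun v => v l)); rewrite /w /vcomb => Heq.
  have /Rmult_integral [] : t * (x l - c l) = 0 by lra.
  - lra.
  - by move=> H; apply: Hne; lra.
have Hcc : in_ball c r c by move=> k; rewrite Rminus_diag Rabs_R0.
have Hmid := Hstrict _ _ (/ 2) _ a Hball Hcc Hwc ltac:(lra) Hfw ltac:(rewrite Hfc /=; lra).
have := Hsub (vcomb (/ 2) w c).
rewrite vdot_sub_vcomb /w vdot_sub_vcomb -/D => Hge.
by apply: (elt_ele_absurd Hmid Hge); nra.
Qed.

Section SeparableSum.

Variables (d : nat) (I : finType) (f : I -> vec d -> ext) (c g : I -> vec d).
Hypothesis Hsub : forall i, subdiff (f i) (c i) (g i).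

Lemma sdot_sub (x : I -> vec d) :
  sdot g (fun i => vsub (x i) (c i)) = sdot g x - sdot g c.
Proof. by rewrite /sdot -sumRB; apply: eq_bigr => i _; rewrite vdot_sub. Qed.

Lemma Ksum_subdiff_fin : Ksum f c = Fin (\big[Rplus/0]_(i : I) efin (f i (c i))).
Proof. by apply: bigE_fin => i; case: (subdiffE (Hsub i)). Qed.

Lemma Ksum_subdiff_ge x :
  ele (Fin (efin (Ksum f c) + (sdot g x - sdot g c))) (Ksum f x).
Proof.
rewrite Ksum_subdiff_fin /= -sdot_sub /sdot -big_split.
by apply: bigE_ge => i; case: (subdiffE (Hsub i)) => _; apply.
Qed.

Lemma Ksum_subdiff_tight x :
  ele (Ksum f x) (Fin (efin (Ksum f c) + (sdot g x - sdot g c))) ->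
  forall i, ele (f i (x i)) (Fin (efin (f i (c i)) + vdot (g i) (vsub (x i) (c i)))).
Proof.
move=> Htight.
set lb := fun i => efin (f i (c i)) + vdot (g i) (vsub (x i) (c i)).
have Hlb : forall i, ele (Fin (lb i)) (f i (x i)).
  by move=> i; case: (subdiffE (Hsub i)) => _; apply.
have Hfin : forall i, f i (x i) = Fin (efin (f i (x i))).
  by move=> i; have [b ->] := bigE_finite Hlb Htight (mem_index_enum i).
have Hsum : \big[Rplus/0]_(i : I) efin (f i (x i)) <= \big[Rplus/0]_(i : I) lb i.
  move: Htight; rewrite Ksum_subdiff_fin /Ksum (bigE_fin _ Hfin) /= -sdot_sub.
  by rewrite /sdot -big_split.
move=> i; rewrite Hfin /=; apply: sumR_squeeze Hsum i => j.
by have := Hlb j; rewrite Hfin.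
Qed.

End SeparableSum.

Lemma Kstar_ge d (V : finType) (Kf : V -> vec d -> ext) (y u : V -> vec d) a :
  Ksum Kf u = Fin a -> ele (Fin (sdot y u - a)) (Kstar Kf y).
Proof. by move=> Hu; apply: esup_ub; exists u; rewrite Hu. Qed.

(* Fenchel-Young: at a subgradient pair the supremum defining [Kstar] is attained. *)
Lemma Kstar_subdiff_le d (V : finType) (Kf : V -> vec d -> ext) (y u : V -> vec d) :
  (forall i, subdiff (Kf i) (u i) (y i)) ->
  ele (Kstar Kf y) (Fin (sdot y u - efin (Ksum Kf u))).
Proof.
move=> Hsub; apply: esup_least => _ [u' ->].
have Hopp : ele (eopp (Ksum Kf u'))
    (Fin (- (efin (Ksum Kf u) + (sdot y u' - sdot y u)))).
  exact: (proj2 (ele_opp (Ksum Kf u') (Fin _)) (Ksum_subdiff_ge Hsub u')).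
by apply: ele_trans (ele_eadd_ub (ele_refl _) Hopp) _ => /=; lra.
Qed.

Lemma sdot_Emul d (V Ed : finType) (src tgt : Ed -> V) (y : V -> vec d) (mu : Ed -> vec d) :
  sdot y (Emul src tgt mu) = sdot mu (ET src tgt y).
Proof.
rewrite /sdot /vdot /Emul /ET.
under eq_bigr do under eq_bigr do rewrite -sumRMl.
under [RHS]eq_bigr do under eq_bigr do rewrite -sumRMl.
rewrite exchange_big /=; under eq_bigr do rewrite exchange_big /=.
rewrite exchange_big /=; apply: eq_bigr => e _; apply: eq_bigr => k _.
by apply: eq_bigr => v _; ring.
Qed.

Section DualCertificate.

Variables (d : nat) (V Ed : finType) (src tgt : Ed -> V).
Variables (Kf : V -> vec d -> ext) (Gf : Ed -> vec d -> ext).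
Variables (ystar u : V -> vec d) (zstar mu : Ed -> vec d).
Hypothesis Hu : forall i, subdiff (Kf i) (u i) (ystar i).
Hypothesis Hmu : forall e, subdiff (Gf e) (zstar e) (mu e).
Hypothesis Hbal : forall i l, u i l + Emul src tgt mu i l = 0.
Hypothesis Hz : forall e l, ET src tgt ystar e l = zstar e l.

Let bound := efin (Ksum Gf zstar) - sdot mu zstar - efin (Ksum Kf u).

Lemma sdot_balanced y z :
  (forall e l, ET src tgt y e l = z e l) -> sdot y u = - sdot mu z.
Proof.
move=> Hyz; have -> : sdot mu z = sdot mu (ET src tgt y).
  by apply: eq_bigr => e _; apply: eq_bigr => k _; rewrite Hyz.
rewrite -sdot_Emul.
rewrite /sdot -sumRN; apply: eq_bigr => v _; rewrite /vdot -sumRN.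
by apply: eq_bigr => k _; have := Hbal v k; nra.
Qed.

Lemma Gfun_ge z : ele (Fin (- sdot mu z - efin (Ksum Kf u))) (Gfun src tgt Kf z).
Proof.
apply: einf_greatest => _ [y [Hyz ->]]; rewrite -(sdot_balanced Hyz).
by apply: Kstar_ge; rewrite (Ksum_subdiff_fin Hu).
Qed.

Lemma Gfun_zstar_le : ele (Gfun src tgt Kf zstar) (Fin (- sdot mu zstar - efin (Ksum Kf u))).
Proof.
apply: ele_trans (einf_lb (ex_intro _ ystar (conj Hz erefl))) _.
by rewrite -(sdot_balanced Hz); apply: Kstar_subdiff_le.
Qed.

Lemma objective_ge z : ele (Fin bound) (objective src tgt Kf Gf z).
Proof.
apply: ele_trans (ele_eadd_lb (Ksum_subdiff_ge Hmu z) (Gfun_ge z)).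
by rewrite /bound /=; lra.
Qed.

Lemma objective_zstar_le : ele (objective src tgt Kf Gf zstar) (Fin bound).
Proof.
rewrite /objective /bound (Ksum_subdiff_fin Hmu) /=.
by apply: ele_trans (ele_eadd_ub (ele_refl (Fin _)) Gfun_zstar_le) _ => /=; lra.
Qed.

Lemma objective_tight z :
  ele (objective src tgt Kf Gf z) (Fin bound) ->
  forall e, ele (Gf e (z e)) (Fin (efin (Gf e (zstar e)) + vdot (mu e) (vsub (z e) (zstar e)))).
Proof.
move=> Hle; apply: (Ksum_subdiff_tight Hmu).
by apply: ele_trans (eadd_ele_fin Hle (Gfun_ge z)) _; rewrite /bound /=; lra.
Qed.

End DualCertificate.

Theorem mainTheorem8
  (d : nat) (hd : leq 1 d)
  (V Ed : finType) (src tgt : Ed -> V) (hloop : forall e, src e <> tgt e)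
  (k : V -> vec d -> vec d -> Prop) (gam : Ed -> vec d -> vec d -> Prop)
  (Kf : V -> vec d -> ext) (Gf : Ed -> vec d -> ext)
  (hk : forall i, max_cyc_monotone (k i))
  (hgam : forall e, max_cyc_monotone (gam e))
  (hK : forall i, closed_proper_convex (Kf i))
  (hG : forall e, closed_proper_convex (Gf e))
  (hkK : forall i u y, k i u y <-> subdiff (Kf i) u y)
  (hgG : forall e z mu, gam e z mu <-> subdiff (Gf e) z mu)
  (ystar : V -> vec d) (zstar : Ed -> vec d)
  (hz : forall e l, zstar e l = ET src tgt ystar e l)
  (h0 : exists (u : V -> vec d) (mu : Ed -> vec d),
          (forall i, k i (u i) (ystar i)) /\
          (forall e, gam e (zstar e) (mu e)) /\
          (forall i l, u i l + Emul src tgt mu i l = 0))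
  (hstrict : forall e, strictly_convex_near (Gf e) (zstar e)) :
  in_im_ET src tgt zstar /\
  (forall z, in_im_ET src tgt z ->
     ele (objective src tgt Kf Gf zstar) (objective src tgt Kf Gf z)) /\
  (forall z, in_im_ET src tgt z ->
     ele (objective src tgt Kf Gf z) (objective src tgt Kf Gf zstar) ->
     forall e l, z e l = zstar e l).
Proof.
case: h0 => u [mu [/(_ _)/hkK Hu [/(_ _)/hgG Hmu Hbal]]].
have Hz : forall e l, ET src tgt ystar e l = zstar e l by move=> e l; rewrite hz.
have Hopt := objective_zstar_le Hu Hmu Hbal Hz.
split; first by exists ystar.
split=> z _; first exact: ele_trans Hopt (objective_ge Hu Hmu Hbal z).
move=> Hle e; apply: (subdiff_tight_eq _ (hstrict e) (Hmu e)).
- by case: (hG e) => _ [].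
- exact: (objective_tight Hu Hmu Hbal (ele_trans Hle Hopt)).
Qed.
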